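(* Assume Assumption (I), and let $(L_k,u_k)$ be a sequence generated by Algorithm A. Then $(u_k)$ is bounded in $V$ and $(F'(u_k))$ is bounded in $V^*$.
   Context: Standing assumptions: $\Omega\subset\mathbb R^d$ bounded Lipschitz domain; $V$ real Hilbert space with inner product $\langle\cdot,\cdot\rangle_V$, $V\subset L^2(\Omega)$ with compact and dense embedding; $V^*$ dual. $F:V\to\mathbb R$ weakly lower semicontinuous, bounded below by an affine function, continuously Fréchet differentiable. $\alpha>0$, $\beta>0$, $p\in(0,1)$. Assumption (I): the standing assumptions hold; $F'$ is completely continuous ($u_n\rightharpoonup u$ in $V$ implies $F'(u_n)\to F'(u)$ in $V^*$); and $F':V\to V^*$ is Lipschitz continuous on bounded sets. For $\epsilon>0$, $\psi_\epsilon(t)=\frac p2\frac{t}{\epsilon^{2-p}}+(1-\frac p2)\epsilon^p$ if $t\in[0,\epsilon^2)$, $\psi_\epsilon(t)=t^{p/2}$ if $t\ge\epsilon^2$, $\psi_\epsilon'(t)=\frac p2\min(\epsilon^{p-2},t^{(p-2)/2})$. Algorithm A: choose a monotonically decreasing sequence $\epsilon_k\searrow0$, constants $\gamma>1$, $\tilde L>0$, and $u_0\in V$. Given $u_k$, for $L\ge0$ let problem (Q$_{k,L}$) be $\min_{u\in V} F(u_k)+F'(u_k)(u-u_k)+\frac L2\|u-u_k\|_V^2+\frac\alpha2\|u\|_V^2+\beta\int_\Omega\big[\psi_{\epsilon_k}(u_k^2)+\psi_{\epsilon_k}'(u_k^2)(u^2-u_k^2)\big]dx$ (strongly convex, unique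 minimizer), and let (D$_{k,L}$) be the condition $F(u_{k+1})\le F(u_k)+F'(u_k)(u_{k+1}-u_k)+L\|u_{k+1}-u_k\|_V^2$ for its minimizer $u_{k+1}$. $L_k$ is the smallest $L\in\{0\}\cup\{\tilde L\gamma^l:l\ge0\}$ for which (D$_{k,L}$) holds, and $u_{k+1}$ is the corresponding minimizer; then $k\mapsto k+1$. *)

From HB Require Import structures.
From mathcomp Require Import all_boot all_order all_algebra.
From mathcomp Require Import all_classical all_reals all_analysis.
Set Implicit Arguments. Unset Strict Implicit. Unset Printing Implicit Defensive.
Import Order.TTheory GRing.Theory Num.Theory.
Import numFieldNormedType.Exports.
Local Open Scope classical_set_scope.
Local Open Scope ring_scope.

Section Defs.
Variable R : realType.

(* [ip] is an inner product on V inducing the norm of V; together with the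
   completeness of V this makes (V, ip) a real Hilbert space. *)
Definition inner_product_inducing_norm (V : normedModType R)
    (ip : V -> V -> R) : Prop :=
  [/\ forall u v, ip u v = ip v u,
      forall (a : R) u v w, ip (a *: u + v) w = a * ip u w + ip v w &
      forall u, ip u u = `|u| ^+ 2].

Definition cont_linear (V : normedModType R) (f : V -> R) : Prop :=
  [/\ forall (a : R) u v, f (a *: u + v) = a * f u + f v & continuous f].

Definition weak_cvg (V : normedModType R) (u_ : nat -> V) (u : V) : Prop :=
  forall f : V -> R, cont_linear f -> (f \o u_) @ \oo --> f u.

Definition weakly_lsc (V : normedModType R) (F : V -> R) : Prop :=
  forall (u_ : nat -> V) (u : V), weak_cvg u_ u ->
    ((F u)%:E <= limn_einf (fun n => (F (u_ n))%:E))%E.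

Definition affine_lower_bound (V : normedModType R) (F : V -> R) : Prop :=
  exists (l : V -> R) (c : R), cont_linear l /\ forall u, l u + c <= F u.

Definition frechet_derivative (V : normedModType R) (F : V -> R)
    (F' : V -> V -> R) : Prop :=
  forall u, differentiable F u /\ forall v, 'd F u v = F' u v.

Definition dual_continuous (V : normedModType R) (F' : V -> V -> R) : Prop :=
  forall u (e : R), 0 < e -> exists2 del : R, 0 < del &
    forall w, `|w - u| < del -> forall v, `|F' w v - F' u v| <= e * `|v|.

Definition completely_continuous (V : normedModType R) (F' : V -> V -> R) : Prop :=
  forall (u_ : nat -> V) (u : V), weak_cvg u_ u ->
    forall e : R, 0 < e -> exists N : nat, forall n, (N <= n)%N ->
      forall v, `|F' (u_ n) v - F' u v| <= e * `|v|.

Definition dual_lipschitz_on_bounded (V : normedModType R) (F' : V -> V -> R) : Prop :=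
  forall r : R, exists K : R, forall u w, `|u| <= r -> `|w| <= r ->
    forall v, `|F' u v - F' w v| <= K * `|u - w| * `|v|.

Section Embedding.
Context d (T : measurableType d) (mu : {measure set T -> \bar R}).

Definition sq_integrable (f : T -> R) : Prop :=
  measurable_fun setT f /\ mu.-integrable setT (fun x => (f x ^+ 2)%:E).

Definition L2dist2 (f g : T -> R) : R := Rintegral mu setT (fun x => (f x - g x) ^+ 2).

Definition compact_dense_embedding (V : normedModType R) (iota : V -> T -> R) : Prop :=
  [/\ forall v, sq_integrable (iota v),
      forall (a : R) u v x, iota (a *: u + v) x = a * iota u x + iota v x &
      forall v, {ae mu, forall x, iota v x = 0} -> v = 0] /\
  [/\ exists C : R, forall v, Rintegral mu setT (fun x => iota v x ^+ 2) <= C * `|v| ^+ 2,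
      (forall v_ : nat -> V, (exists M : R, forall n, `|v_ n| <= M) ->
         exists (phi : nat -> nat) (f : T -> R),
           [/\ forall n, (phi n < phi n.+1)%N, sq_integrable f &
               (fun n => L2dist2 (iota (v_ (phi n))) f) @ \oo --> 0]) &
      forall f, sq_integrable f -> forall e : R, 0 < e ->
        exists v, L2dist2 (iota v) f < e].
End Embedding.

Definition psi (p eps t : R) : R :=
  if t < eps ^+ 2 then p / 2 * t / powR eps (2 - p) + (1 - p / 2) * powR eps p
  else powR t (p / 2).

(* psi'_eps(t) = p/2 min(eps^(p-2), t^((p-2)/2)), t >= 0 (at t = 0 the second
   argument is +oo, so the min is eps^(p-2)) *)
Definition dpsi (p eps t : R) : R :=
  if t < eps ^+ 2 then p / 2 * powR eps (p - 2)
  else p / 2 * powR t ((p - 2) / 2).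

Section AlgoA.
Context d (T : measurableType d) (mu : {measure set T -> \bar R}).
Context (V : normedModType R) (iota : V -> T -> R) (F : V -> R) (F' : V -> V -> R).
Context (alpha beta p : R) (eps : nat -> R).

Definition Qobj (k : nat) (uk : V) (L : R) (u : V) : R :=
  F uk + F' uk (u - uk) + L / 2 * `|u - uk| ^+ 2 + alpha / 2 * `|u| ^+ 2
  + beta * Rintegral mu setT (fun x =>
      psi p (eps k) (iota uk x ^+ 2)
      + dpsi p (eps k) (iota uk x ^+ 2) * (iota u x ^+ 2 - iota uk x ^+ 2)).

Definition is_Q_minimizer (k : nat) (uk : V) (L : R) (u : V) : Prop :=
  forall w, Qobj k uk L u <= Qobj k uk L w.

Definition cond_D (uk : V) (L : R) (unew : V) : Prop :=
  F unew <= F uk + F' uk (unew - uk) + L * `|unew - uk| ^+ 2.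

Definition L_candidate (gamma Ltil L : R) : Prop :=
  L = 0 \/ exists l : nat, L = Ltil * gamma ^+ l.

Definition generated_by_algoA (gamma Ltil : R) (u0 : V)
    (L_ : nat -> R) (u_ : nat -> V) : Prop :=
  u_ 0%N = u0 /\
  forall k : nat,
    [/\ L_candidate gamma Ltil (L_ k),
        is_Q_minimizer k (u_ k) (L_ k) (u_ k.+1),
        cond_D (u_ k) (L_ k) (u_ k.+1) &
        forall L, L_candidate gamma Ltil L -> L < L_ k ->
          forall v, is_Q_minimizer k (u_ k) L v -> ~ cond_D (u_ k) L v].
End AlgoA.

End Defs.

From HB Require Import structures.
From mathcomp Require Import all_boot all_order all_algebra.
From mathcomp Require Import all_classical all_reals all_analysis.
From mathcomp Require Import ring lra measurable_realfun.
Set Implicit Arguments. Unset Strict Implicit. Unset Printing Implicit Defensive.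
Import Order.TTheory GRing.Theory Num.Theory.
Import numFieldNormedType.Exports.
Local Open Scope classical_set_scope.
Local Open Scope ring_scope.

(* The iterates decrease the smoothed energy
     J_eps(u) = F u + alpha/2 |u|^2 + beta \int psi_eps(u^2).
   Since psi_eps is concave in t = u^2, its linearisation in (Q_{k,L}) majorises it;
   with (D_{k,L}) this bounds J_{eps_k}(u_{k+1}) by the proximal model at u_{k+1} plus
   its proximal term, which by convexity of the model is at most J_{eps_k}(u_k).  As
   J_eps also decreases with eps, F(u_k) + alpha/2 |u_k|^2 <= J_{eps_0}(u_0), and the
   affine lower bound on F makes (u_k) bounded.  Boundedness of (F'(u_k)) then follows
   from the Lipschitz continuity of F' on bounded sets. *)

Section ConcavePower.
Variables (R : realType) (q : R).
Hypotheses (q_gt0 : 0 < q) (q_lt1 : q < 1).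

Lemma powR_le_affine (x : R) : 0 <= x -> x `^ q <= q * x + (1 - q).
Proof.
move=> x_ge0.
have := @conjugate_powR R (x `^ q) 1 q^-1 (1 - q)^-1 (powR_ge0 _ _) ler01.
rewrite mulr1 -powRrM mulfV ?gt_eqF// powRr1// powR1 !invrK mul1r mulrC.
by apply; rewrite ?invr_gt0 ?subr_gt0// addrC subrK.
Qed.

Lemma powR_le_tangent (a b : R) : 0 < a -> 0 <= b ->
  b `^ q <= a `^ q + q * a `^ (q - 1) * (b - a).
Proof.
move=> a_gt0 b_ge0.
have ba_ge0 : 0 <= b / a by rewrite divr_ge0 // ltW.
have -> : b = a * (b / a) by rewrite mulrC divfK ?gt_eqF.
rewrite (powRM _ (ltW a_gt0) ba_ge0).
have -> : a `^ (q - 1) = a `^ q / a.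
  by rewrite -(mulr_powRB1 (ltW a_gt0) q_gt0); field; rewrite gt_eqF.
apply: le_trans (ler_wpM2l (powR_ge0 a q) (powR_le_affine ba_ge0)) _.
by rewrite le_eqVlt; apply/orP; left; apply/eqP; field; rewrite gt_eqF.
Qed.

Lemma powR_subr1_antitone (x y : R) : 0 < x -> x <= y ->
  y `^ (q - 1) <= x `^ (q - 1).
Proof.
move=> x_gt0 xy; have y_gt0 := lt_le_trans x_gt0 xy.
rewrite -(opprB 1 q) !powRN lef_pV2 ?posrE ?powR_gt0//.
by apply: ge0_ler_powR => //; rewrite ?nnegrE ?subr_ge0 ?ltW//.
Qed.

End ConcavePower.

Section SmoothPower.
Variable R : realType.
Implicit Types q E a b t : R.

(* [t ^ q] with its graph replaced by the tangent at [E] on [t < E]; the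
   paper's [psi_eps] is [smooth_powR (p / 2) (eps ^+ 2)] (lemma [psiE]). *)
Definition smooth_powR q E t :=
  if t < E then q * t * E `^ (q - 1) + (1 - q) * E `^ q else t `^ q.

Definition dsmooth_powR q E t :=
  if t < E then q * E `^ (q - 1) else q * t `^ (q - 1).

Variable q : R.
Hypotheses (q_gt0 : 0 < q) (q_lt1 : q < 1).

Lemma smooth_powR_le_tangent E a b : 0 < E -> 0 <= a -> 0 <= b ->
  smooth_powR q E b <= smooth_powR q E a + dsmooth_powR q E a * (b - a).
Proof.
move=> E_gt0 a_ge0 b_ge0; rewrite /smooth_powR /dsmooth_powR.
rewrite -(mulr_powRB1 (ltW E_gt0) q_gt0).
have := powR_gt0 (q - 1) E_gt0; set G := E `^ (q - 1) => G_gt0.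
case: ifPn => bE; case: ifPn => aE; rewrite -?leNgt in aE bE.
- by rewrite le_eqVlt; apply/orP; left; apply/eqP; ring.
- have := powR_le_tangent q_gt0 q_lt1 (lt_le_trans E_gt0 aE) (ltW E_gt0).
  rewrite -(mulr_powRB1 (ltW E_gt0) q_gt0) -/G.
  have := powR_subr1_antitone q_lt1 E_gt0 aE; rewrite -/G => aG.
  have : 0 <= q * (E - b) * (G - a `^ (q - 1)).
    by rewrite !mulr_ge0 ?subr_ge0 ?(ltW q_gt0) ?(ltW bE).
  nra.
- have := powR_le_tangent q_gt0 q_lt1 E_gt0 b_ge0.
  rewrite -(mulr_powRB1 (ltW E_gt0) q_gt0) -/G; lra.
- by have := powR_le_tangent q_gt0 q_lt1 (lt_le_trans E_gt0 aE) b_ge0.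
Qed.

Lemma smooth_powR_ge0 E t : 0 < E -> 0 <= t -> 0 <= smooth_powR q E t.
Proof.
move=> E_gt0 t_ge0; rewrite /smooth_powR; case: ifP => _; last exact: powR_ge0.
by rewrite addr_ge0 ?mulr_ge0 ?powR_ge0 ?subr_ge0 ?(ltW q_gt0) ?(ltW q_lt1).
Qed.

Lemma smooth_powR_homo E' E t : 0 < E' -> E' <= E -> 0 <= t ->
  smooth_powR q E' t <= smooth_powR q E t.
Proof.
move=> E'_gt0 E'E t_ge0; have E_gt0 := lt_le_trans E'_gt0 E'E.
rewrite /smooth_powR -(mulr_powRB1 (ltW E_gt0) q_gt0).
rewrite -(mulr_powRB1 (ltW E'_gt0) q_gt0).
have := powR_subr1_antitone q_lt1 E'_gt0 E'E.
set G := E `^ (q - 1); set G' := E' `^ (q - 1) => GG'.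
case: ifPn => tE'; case: ifPn => tE; rewrite -?leNgt in tE tE'.
- have := powR_le_tangent q_gt0 q_lt1 E_gt0 (ltW E'_gt0).
  rewrite -(mulr_powRB1 (ltW E_gt0) q_gt0) -(mulr_powRB1 (ltW E'_gt0) q_gt0).
  rewrite -/G -/G'.
  have : 0 <= q * (E' - t) * (G' - G).
    by rewrite !mulr_ge0 ?subr_ge0 ?(ltW q_gt0) ?(ltW tE').
  nra.
- by move: tE; rewrite leNgt (lt_le_trans tE' E'E).
- have := powR_le_tangent q_gt0 q_lt1 E_gt0 t_ge0.
  rewrite -(mulr_powRB1 (ltW E_gt0) q_gt0) -/G; nra.
- by [].
Qed.

Lemma smooth_powR_le_affine E t : 0 < E -> 0 <= t ->
  smooth_powR q E t <= E `^ q + 1 + t.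
Proof.
move=> E_gt0 t_ge0; rewrite /smooth_powR; case: ifP => tE.
- rewrite -(mulr_powRB1 (ltW E_gt0) q_gt0).
  have : 0 <= q * (E - t) * E `^ (q - 1) by rewrite !mulr_ge0 ?powR_ge0 ?subr_ge0 ?ltW.
  have := powR_ge0 E (q - 1); nra.
- have := powR_le_affine q_gt0 q_lt1 t_ge0; have := powR_ge0 E q.
  have : 0 <= (1 - q) * t by rewrite mulr_ge0 ?subr_ge0 ?(ltW q_lt1).
  have := q_gt0; lra.
Qed.

Lemma dsmooth_powR_ge0 E t : 0 < E -> 0 <= dsmooth_powR q E t.
Proof.
move=> E_gt0; rewrite /dsmooth_powR.
by case: ifP; rewrite mulr_ge0 ?powR_ge0 ?(ltW q_gt0).
Qed.

Lemma dsmooth_powR_le E t : 0 < E -> dsmooth_powR q E t <= q * E `^ (q - 1).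
Proof.
move=> E_gt0; rewrite /dsmooth_powR; case: ifPn => // tE.
by rewrite ler_wpM2l ?(ltW q_gt0)//; apply: powR_subr1_antitone; rewrite // leNgt.
Qed.

End SmoothPower.

Lemma measurable_smooth_powR (R : realType) (q E : R) :
  measurable_fun setT (smooth_powR q E).
Proof.
apply: measurable_fun_ifT; first by apply: measurable_fun_ltr.
- by apply: measurable_funD => //; apply: measurable_funM.
- exact: measurable_powR.
Qed.

Lemma measurable_dsmooth_powR (R : realType) (q E : R) :
  measurable_fun setT (dsmooth_powR q E).
Proof.
apply: measurable_fun_ifT; first by apply: measurable_fun_ltr.
- exact: measurable_cst.
- by apply: measurable_funM => //; exact: measurable_powR.
Qed.

Lemma psiE (R : realType) (p eps t : R) : 0 < eps ->
  psi p eps t = smooth_powR (p / 2) (eps ^+ 2) t.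
Proof.
move=> eps_gt0; rewrite /psi /smooth_powR -!powR_mulrn ?ltW// -!powRrM.
have -> : 2%:R * (p / 2 - 1) = - (2 - p) by field.
have -> : 2%:R * (p / 2) = p by field.
by rewrite powRN.
Qed.

Lemma dpsiE (R : realType) (p eps t : R) : 0 < eps ->
  dpsi p eps t = dsmooth_powR (p / 2) (eps ^+ 2) t.
Proof.
move=> eps_gt0; rewrite /dpsi /dsmooth_powR -powR_mulrn ?ltW// -powRrM.
have -> : 2%:R * (p / 2 - 1) = p - 2 by field.
by have -> : (p - 2) / 2 = p / 2 - 1 by field.
Qed.

Section RealIntegrability.
Context (R : realType) (d : measure_display) (T : measurableType d)
  (mu : {measure set T -> \bar R}).

Lemma integrable_EFinD (f g : T -> R) :
  mu.-integrable setT (EFin \o f) -> mu.-integrable setT (EFin \o g) ->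
  mu.-integrable setT (EFin \o (f \+ g)).
Proof. exact: integrableD. Qed.

Lemma integrable_EFinZl (k : R) (f : T -> R) :
  mu.-integrable setT (EFin \o f) -> mu.-integrable setT (EFin \o (fun x => k * f x)).
Proof. exact: integrableZl. Qed.

Lemma integrable_EFin_cst (k : R) : (mu setT < +oo)%E ->
  mu.-integrable setT (EFin \o cst k).
Proof.
move=> mu_fin; apply/integrableP; split; first exact/measurable_EFinP.
rewrite (_ : (fun x => _) = cst (`|k|)%:E); last by apply: funext.
by rewrite integral_cst// lte_mul_pinfty.
Qed.

Lemma integrable_EFin_le (f g : T -> R) : measurable_fun setT f ->
  (forall x, `|f x| <= g x) -> mu.-integrable setT (EFin \o g) ->
  mu.-integrable setT (EFin \o f).
Proof.
move=> mf fg; apply: le_integrable => //; first exact/measurable_EFinP.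
by move=> x _ /=; rewrite lee_fin (le_trans (fg x)) ?ler_norm.
Qed.

Lemma Rintegral_le_convex_comb (f g h : T -> R) (t : R) :
  mu.-integrable setT (EFin \o f) -> mu.-integrable setT (EFin \o g) ->
  mu.-integrable setT (EFin \o h) ->
  (forall x, h x <= (1 - t) * f x + t * g x) ->
  Rintegral mu setT h <= (1 - t) * Rintegral mu setT f + t * Rintegral mu setT g.
Proof.
move=> fi gi hi hfg.
rewrite -!RintegralZl// -RintegralD//; last 2 first.
- exact: integrable_EFinZl.
- exact: integrable_EFinZl.
by apply: le_Rintegral => //; apply: integrable_EFinD; exact: integrable_EFinZl.
Qed.

End RealIntegrability.

Lemma le_of_forall_lt1_mul (R : realFieldType) (a b : R) :
  (forall t, 0 < t -> t < 1 -> t * a <= b) -> a <= b.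
Proof.
move=> tab; have [a_le0|a_gt0] := lerP a 0.
  have := tab 2^-1; rewrite invr_gt0 invf_lt1 ?ltr0n ?ltr1n// => /(_ isT isT).
  lra.
apply/ler_addgt0Pr => e e_gt0.
have ae_gt0 : 0 < a + e by rewrite addr_gt0.
have := tab (a / (a + e)); rewrite divr_gt0// ltr_pdivrMr// mul1r ltrDl.
move=> /(_ isT e_gt0) hb; suff : a - e <= a / (a + e) * a by lra.
rewrite mulrAC ler_pdivlMr//; nra.
Qed.

Lemma sqr_norm_convex (R : realType) (V : normedModType R) (a b : V) (t : R) :
  0 <= t -> t <= 1 ->
  `|(1 - t) *: a + t *: b| ^+ 2 <= (1 - t) * `|a| ^+ 2 + t * `|b| ^+ 2.
Proof.
move=> t_ge0 t_le1; have t'_ge0 : 0 <= 1 - t by rewrite subr_ge0.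
have hw : `|(1 - t) *: a + t *: b| <= (1 - t) * `|a| + t * `|b|.
  by rewrite (le_trans (ler_normD _ _))// !normrZ !ger0_norm.
have := normr_ge0 ((1 - t) *: a + t *: b) => w_ge0.
have : 0 <= t * (1 - t) * (`|a| - `|b|) ^+ 2 by rewrite mulr_ge0 ?sqr_ge0 ?mulr_ge0.
have := ler_pM w_ge0 w_ge0 hw hw; rewrite !expr2; nra.
Qed.

(* Comparing the minimiser [u'] of [G + L/2 |. - u|^2] with the points of the
   segment [u, u'] and letting them tend to [u'] doubles the proximal term. *)
Lemma prox_descent (R : realType) (V : normedModType R) (G : V -> R)
    (L : R) (u u' : V) :
  (forall t, 0 < t -> t < 1 ->
     G ((1 - t) *: u + t *: u') <= (1 - t) * G u + t * G u') ->
  (forall w, G u' + L / 2 * `|u' - u| ^+ 2 <= G w + L / 2 * `|w - u| ^+ 2) ->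
  G u' + L * `|u' - u| ^+ 2 <= G u.
Proof.
move=> Gconv u'min; set c := L / 2 * `|u' - u| ^+ 2.
suff : c <= G u - G u' - c by rewrite /c; lra.
apply: le_of_forall_lt1_mul => t t_gt0 t_lt1.
have segment : (1 - t) *: u + t *: u' - u = t *: (u' - u).
  by rewrite scalerBl scale1r scalerBr addrAC [u - _ - u]addrAC subrr add0r addrC.
have := u'min ((1 - t) *: u + t *: u').
rewrite segment normrZ gtr0_norm// exprMn -/c (mulrCA _ (t ^+ 2)) -/c => u'_le.
have := Gconv t t_gt0 t_lt1 => Gseg.
have : (1 - t) * (t * c) <= (1 - t) * (G u - G u' - c).
  by rewrite expr2 in u'_le; nra.
by rewrite ler_pM2l ?subr_gt0.
Qed.

Lemma cont_linear_bounded (R : realType) (V : normedModType R) (f : V -> R) :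
  cont_linear f -> exists K, forall u, `|f u| <= K * `|u|.
Proof.
case=> flin fcont.
pose fL : {linear V -> R} := HB.pack f (GRing.isLinear.Build _ _ _ _ f flin).
have /linear_boundedP/pinfty_ex_gt0[K _ fK] : bounded_near fL (nbhs 0).
  by apply: continuous_linear_bounded; exact: fcont.
by exists K.
Qed.

Section FrechetDerivative.
Variables (R : realType) (V : normedModType R) (F : V -> R) (F' : V -> V -> R).
Hypothesis dF : frechet_derivative F F'.

Lemma frechet_derivativeE u : F' u = 'd F u.
Proof. by have [_ dFu] := dF u; apply/funext => v; rewrite dFu. Qed.

Lemma frechet_derivative_cont_linear u : cont_linear (F' u).
Proof.
have [Fdiff _] := dF u; rewrite frechet_derivativeE.
by split; [move=> a v w; rewrite linearP | exact: diff_continuous].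
Qed.

End FrechetDerivative.

Lemma sqr_le_affine_bounded (R : realFieldType) (a b c : R) : 0 < a ->
  exists M, forall r, 0 <= r -> a * r ^+ 2 <= b * r + c -> r <= M.
Proof.
move=> a_gt0; exists (1 + (`|b| + `|c|) / a) => r r_ge0 hr.
have bc_ge0 : 0 <= (`|b| + `|c|) / a by rewrite divr_ge0 ?addr_ge0 ?(ltW a_gt0).
have [r_le1|r_gt1] := lerP r 1; first by rewrite ler_wpDr.
rewrite ler_wpDl// ler_pdivlMr// mulrC.
rewrite -(ler_pM2r (lt_trans ltr01 r_gt1)) -mulrA -expr2 (le_trans hr)//.
have := ler_norm b; have := ler_norm c; have := normr_ge0 c; nra.
Qed.

Lemma dual_bounded_on_balls (R : realType) (V : normedModType R)
    (F : V -> R) (F' : V -> V -> R) :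
  frechet_derivative F F' -> dual_lipschitz_on_bounded F' ->
  forall r, exists M, forall u, `|u| <= r -> forall v, `|F' u v| <= M * `|v|.
Proof.
move=> dF F'lip r; have [K hK] := F'lip r.
have [K0 hK0] := cont_linear_bounded (frechet_derivative_cont_linear dF 0).
exists (`|K| * r + K0) => u ur v.
have r0 : `|0 : V| <= r by rewrite normr0 (le_trans (normr_ge0 u)).
have := hK _ _ ur r0 v; rewrite subr0 => F'u0.
have K_le : K * `|u| * `|v| <= `|K| * r * `|v|.
  by rewrite ler_wpM2r// (le_trans (ler_wpM2r (normr_ge0 _) (ler_norm K))) ?ler_wpM2l.
have := ler_normD (F' u v - F' 0 v) (F' 0 v); rewrite subrK.
have := hK0 v; lra.
Qed.

Section Energy.
Context (R : realType) (d : measure_display) (T : measurableType d)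
  (mu : {measure set T -> \bar R}) (V : normedModType R) (iota : V -> T -> R).
Hypotheses (mu_fin : (mu setT < +oo)%E)
  (iota_lin : forall (a : R) u v x, iota (a *: u + v) x = a * iota u x + iota v x)
  (iota_sq : forall v, sq_integrable mu (iota v)).
Variables (p : R) (F : V -> R) (F' : V -> V -> R) (alpha beta : R).
Hypotheses (p_gt0 : 0 < p) (p_lt1 : p < 1) (dF : frechet_derivative F F')
  (alpha_ge0 : 0 <= alpha) (beta_ge0 : 0 <= beta).

Let q_gt0 : 0 < p / 2. Proof. by rewrite divr_gt0. Qed.
Let q_lt1 : p / 2 < 1.
Proof. by rewrite ltr_pdivrMr// mul1r (lt_trans p_lt1)// ltr1n. Qed.

Lemma iotaZD (a b : R) u v x :
  iota (a *: u + b *: v) x = a * iota u x + b * iota v x.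
Proof.
have iota0 y : iota 0 y = 0.
  by have := iota_lin (-1) 0 0 y; rewrite scaler0 addr0 mulN1r addNr.
have iotaZ c w y : iota (c *: w) y = c * iota w y.
  by have := iota_lin c w 0 y; rewrite addr0 iota0 addr0.
by rewrite iota_lin iotaZ.
Qed.

Definition penalty (E : R) (u : V) : R :=
  Rintegral mu setT (fun x => smooth_powR (p / 2) E (iota u x ^+ 2)).

Definition energy (E : R) (u : V) : R :=
  F u + alpha / 2 * `|u| ^+ 2 + beta * penalty E u.

Let measurable_sq u : measurable_fun setT (fun x => iota u x ^+ 2).
Proof. by apply: measurable_funX; case: (iota_sq u). Qed.

Let integrable_sq u : mu.-integrable setT (EFin \o (fun x => iota u x ^+ 2)).
Proof. by case: (iota_sq u). Qed.

Lemma integrable_smooth_powR_sq E u : 0 < E ->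
  mu.-integrable setT (EFin \o (fun x => smooth_powR (p / 2) E (iota u x ^+ 2))).
Proof.
move=> E_gt0.
apply: (integrable_EFin_le (g := fun x => E `^ (p / 2) + 1 + iota u x ^+ 2)).
- exact: measurableT_comp (measurable_smooth_powR _ _) (measurable_sq u).
- move=> x; rewrite ger0_norm ?smooth_powR_ge0 ?sqr_ge0//.
  by apply: smooth_powR_le_affine; rewrite ?sqr_ge0.
- exact: integrable_EFinD (integrable_EFin_cst _ mu_fin) (integrable_sq u).
Qed.

Lemma penalty_ge0 E u : 0 < E -> 0 <= penalty E u.
Proof.
by move=> E_gt0; apply: Rintegral_ge0 => x _; rewrite smooth_powR_ge0 ?sqr_ge0.
Qed.

Lemma energy_ge E u : 0 < E -> F u + alpha / 2 * `|u| ^+ 2 <= energy E u.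
Proof. by move=> E_gt0; rewrite lerDl mulr_ge0 ?penalty_ge0. Qed.

Lemma energy_homo E' E u : 0 < E' -> E' <= E -> energy E' u <= energy E u.
Proof.
move=> E'_gt0 E'E; rewrite lerD2l ler_wpM2l//.
apply: le_Rintegral; rewrite ?integrable_smooth_powR_sq ?(lt_le_trans E'_gt0)//.
by move=> x _; rewrite smooth_powR_homo ?sqr_ge0.
Qed.

Section Linearization.
Variable E : R.
Hypothesis E_gt0 : 0 < E.

Definition penalty_lin (u0 u : V) : R :=
  Rintegral mu setT (fun x => smooth_powR (p / 2) E (iota u0 x ^+ 2)
    + dsmooth_powR (p / 2) E (iota u0 x ^+ 2) * (iota u x ^+ 2 - iota u0 x ^+ 2)).

Let integrable_lin_integrand u0 u : mu.-integrable setT (EFin \o (fun x =>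
  smooth_powR (p / 2) E (iota u0 x ^+ 2)
  + dsmooth_powR (p / 2) E (iota u0 x ^+ 2) * (iota u x ^+ 2 - iota u0 x ^+ 2))).
Proof.
apply: integrable_EFinD; first exact: integrable_smooth_powR_sq.
apply: (integrable_EFin_le
  (g := fun x => p / 2 * E `^ (p / 2 - 1) * (iota u x ^+ 2 + iota u0 x ^+ 2))).
- apply: measurable_funM; last exact: measurable_funB.
  exact: measurableT_comp (measurable_dsmooth_powR _ _) (measurable_sq u0).
- move=> x; rewrite normrM ger0_norm ?dsmooth_powR_ge0//.
  rewrite ler_pM ?dsmooth_powR_ge0 ?dsmooth_powR_le//.
  by rewrite (le_trans (ler_normB _ _))// !ger0_norm ?sqr_ge0.
- exact/integrable_EFinZl/integrable_EFinD.
Qed.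

Lemma penalty_lin_xx u : penalty_lin u u = penalty E u.
Proof. by apply: eq_Rintegral => x _; rewrite subrr mulr0 addr0. Qed.

Lemma penalty_le_lin u0 u : penalty E u <= penalty_lin u0 u.
Proof.
apply: le_Rintegral; rewrite ?integrable_smooth_powR_sq//.
by move=> x _; rewrite smooth_powR_le_tangent ?sqr_ge0.
Qed.

Lemma penalty_lin_convex u0 u u' t : 0 <= t -> t <= 1 ->
  penalty_lin u0 ((1 - t) *: u + t *: u')
  <= (1 - t) * penalty_lin u0 u + t * penalty_lin u0 u'.
Proof.
move=> t_ge0 t_le1; apply: Rintegral_le_convex_comb => // x.
rewrite iotaZD; set A := iota u x; set B := iota u' x.
have := dsmooth_powR_ge0 q_gt0 (iota u0 x ^+ 2) E_gt0.
set G := dsmooth_powR _ _ _ => G_ge0.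
have : ((1 - t) * A + t * B) ^+ 2 <= (1 - t) * A ^+ 2 + t * B ^+ 2.
  have : 0 <= t * (1 - t) * (A - B) ^+ 2 by rewrite mulr_ge0 ?sqr_ge0 ?mulr_ge0 ?subr_ge0.
  rewrite !expr2; lra.
move=> /(ler_wpM2l G_ge0); lra.
Qed.

Definition lin_model (u0 u : V) : R :=
  F u0 + F' u0 (u - u0) + alpha / 2 * `|u| ^+ 2 + beta * penalty_lin u0 u.

Lemma lin_model_xx u : lin_model u u = energy E u.
Proof.
by rewrite /lin_model subrr (frechet_derivativeE dF) linear0 addr0 penalty_lin_xx.
Qed.

Lemma lin_model_convex u0 u u' t : 0 < t -> t < 1 ->
  lin_model u0 ((1 - t) *: u + t *: u')
  <= (1 - t) * lin_model u0 u + t * lin_model u0 u'.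
Proof.
move=> t_gt0 t_lt1.
have segment : (1 - t) *: u + t *: u' - u0 = (1 - t) *: (u - u0) + t *: (u' - u0).
  by rewrite !scalerBr addrACA -opprD -scalerDl subrK scale1r.
have F'seg : F' u0 ((1 - t) *: u + t *: u' - u0)
    = (1 - t) * F' u0 (u - u0) + t * F' u0 (u' - u0).
  by rewrite segment (frechet_derivativeE dF) linearD !linearZ.
have := sqr_norm_convex u u' (ltW t_gt0) (ltW t_lt1).
move=> /(ler_wpM2l (divr_ge0 alpha_ge0 (ler0n _ 2))).
have := penalty_lin_convex u0 u u' (ltW t_gt0) (ltW t_lt1).
move=> /(ler_wpM2l beta_ge0).
rewrite /lin_model F'seg; nra.
Qed.

Lemma energy_le_lin_model u0 u L : cond_D F F' u0 L u ->
  energy E u <= lin_model u0 u + L * `|u - u0| ^+ 2.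
Proof.
rewrite /cond_D /energy /lin_model => Du.
have := ler_wpM2l beta_ge0 (penalty_le_lin u0 u); lra.
Qed.

Lemma energy_descent u0 u L :
  (forall w, lin_model u0 u + L / 2 * `|u - u0| ^+ 2
             <= lin_model u0 w + L / 2 * `|w - u0| ^+ 2) ->
  cond_D F F' u0 L u -> energy E u <= energy E u0.
Proof.
move=> umin Du; rewrite -(lin_model_xx u0).
apply: le_trans (energy_le_lin_model Du) _.
exact: prox_descent (lin_model_convex u0 u0 u) umin.
Qed.

End Linearization.

End Energy.

Section AlgorithmA.
Context (R : realType) (d : measure_display) (T : measurableType d)
  (mu : {measure set T -> \bar R}) (V : normedModType R) (iota : V -> T -> R).
Hypotheses (mu_fin : (mu setT < +oo)%E)
  (iota_lin : forall (a : R) u v x, iota (a *: u + v) x = a * iota u x + iota v x)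
  (iota_sq : forall v, sq_integrable mu (iota v)).
Variables (F : V -> R) (F' : V -> V -> R) (alpha beta p : R) (eps : nat -> R).
Hypotheses (dF : frechet_derivative F F') (alpha_ge0 : 0 <= alpha)
  (beta_ge0 : 0 <= beta) (p_gt0 : 0 < p) (p_lt1 : p < 1)
  (eps_gt0 : forall k, 0 < eps k) (eps_homo : forall k, eps k.+1 <= eps k).

Lemma QobjE k u0 L u :
  Qobj mu iota F F' alpha beta p eps k u0 L u
  = lin_model mu iota p F F' alpha beta (eps k ^+ 2) u0 u + L / 2 * `|u - u0| ^+ 2.
Proof.
rewrite /Qobj /lin_model (_ : Rintegral _ _ _ = penalty_lin mu iota p (eps k ^+ 2) u0 u).
  by lra.
by apply: eq_Rintegral => x _; rewrite psiE ?dpsiE.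
Qed.

Lemma energy_algoA_le gamma Ltil u0 L_ u_ :
  generated_by_algoA mu iota F F' alpha beta p eps gamma Ltil u0 L_ u_ ->
  forall k, energy mu iota p F alpha beta (eps k ^+ 2) (u_ k)
            <= energy mu iota p F alpha beta (eps 0 ^+ 2) (u_ 0).
Proof.
move=> [_ step]; elim=> [//|k IHk]; apply: le_trans IHk.
have [_ umin Du _] := step k.
apply: (@le_trans _ _ (energy mu iota p F alpha beta (eps k ^+ 2) (u_ k.+1))).
  apply: energy_homo => //; first by rewrite exprn_gt0.
  by rewrite ler_sqr ?nnegrE ?(ltW (eps_gt0 _)).
apply: energy_descent Du => //; first by rewrite exprn_gt0.
by move=> w; rewrite -!QobjE.
Qed.

Lemma algoA_bounded_objective gamma Ltil u0 L_ u_ :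
  generated_by_algoA mu iota F F' alpha beta p eps gamma Ltil u0 L_ u_ ->
  exists C, forall k, F (u_ k) + alpha / 2 * `|u_ k| ^+ 2 <= C.
Proof.
move=> gen; eexists => k; apply: le_trans (energy_algoA_le gen k).
by apply: energy_ge => //; rewrite exprn_gt0.
Qed.

End AlgorithmA.

Theorem lemma7p4
  (R : realType)
  (d : measure_display) (T : measurableType d) (mu : {measure set T -> \bar R})
  (hmu : (mu setT < +oo)%E)
  (V : completeNormedModType R) (ip : V -> V -> R)
  (hip : inner_product_inducing_norm ip)
  (iota : V -> T -> R) (hiota : compact_dense_embedding mu iota)
  (F : V -> R) (F' : V -> V -> R)
  (hFwlsc : weakly_lsc F) (hFaff : affine_lower_bound F)
  (hF' : frechet_derivative F F') (hF'cont : dual_continuous F')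
  (hF'cc : completely_continuous F') (hF'lip : dual_lipschitz_on_bounded F')
  (alpha beta p : R) (halpha : 0 < alpha) (hbeta : 0 < beta)
  (hp0 : 0 < p) (hp1 : p < 1)
  (eps : nat -> R) (heps0 : forall k, 0 < eps k)
  (hepsmon : forall k, eps k.+1 <= eps k) (hepscvg : eps @ \oo --> 0)
  (gamma Ltil : R) (hgamma : 1 < gamma) (hLtil : 0 < Ltil) (u0 : V)
  (L_ : nat -> R) (u_ : nat -> V)
  (hgen : generated_by_algoA mu iota F F' alpha beta p eps gamma Ltil u0 L_ u_) :
  (exists M : R, forall k, `|u_ k| <= M) /\
  (exists M : R, forall k (v : V), `|F' (u_ k) v| <= M * `|v|).
Proof.
have [[iota_sq iota_lin _] _] := hiota.
have [C FC] := algoA_bounded_objective hmu iota_lin iota_sq hF' (ltW halpha) (ltW hbeta)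
  hp0 hp1 heps0 hepsmon hgen.
have [l [c [l_lin lF]]] := hFaff; have [K lK] := cont_linear_bounded l_lin.
have [M uM] : exists M, forall k, `|u_ k| <= M.
  have [M hM] := sqr_le_affine_bounded K (C - c) (divr_gt0 halpha (ltr0n _ 2)).
  exists M => k; apply: hM (normr_ge0 _) _.
  have := FC k; have := lF (u_ k); have /ler_normlP[] := lK (u_ k); lra.
split; first by exists M.
have [M' hM'] := dual_bounded_on_balls hF' hF'lip M.
by exists M' => k; apply: hM'.
Qed.
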